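(* A set $A\subseteq\mathbb{N}$ is $D$-w.e.u. if and only if it is $wtt$-complete.
   Context: $\varphi_0,\varphi_1,\ldots$ is a standard acceptable enumeration of the partial computable functions $\mathbb{N}\to\mathbb{N}$; $\varphi_e^A$ denotes the $e$th partial function computable with oracle $A$; $\mathcal{K}=\{e:\varphi_e(e)\text{ defined}\}$; $\mathbb{1}_A$ the characteristic function of $A$. $\mathfrak{P}_{\mathrm{fin}}(\mathbb{N})$ is the set of finite subsets of $\mathbb{N}$; $f\colon\mathbb{N}\to\mathfrak{P}_{\mathrm{fin}}(\mathbb{N})$ is computable if $e\mapsto$ (canonical index of $f(e)$) is computable. A recursively enumerable $A$ is $D$-w.e.u. if there is a computable $f\colon\mathbb{N}\to\mathfrak{P}_{\mathrm{fin}}(\mathbb{N})$ such that for all $e$: if $\varphi_e(z)$ is defined for all $z\in f(e)$, then there is $z\in f(e)$ with $\varphi_e(z)\neq\mathbb{1}_A(z)$. A recursively enumerable $A$ is $wtt$-complete if there are an index $e$ and a total computable $f\colon\mathbb{N}\to\mathbb{N}$ such that $\mathbb{1}_{\mathcal{K}}=\varphi_e^A$ and for every $x$ the computation of $\varphi_e^A(x)$ queries the oracle only about numbers below $f(x)$. *)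

(* A concrete model of (oracle) partial computable functions:
   unary partial mu-recursive functions on nat with Cantor pairing, an oracle
   primitive, and a Goedel numbering [decode : nat -> code]. *)
From Stdlib Require Import Arith Cantor.

Inductive code : Type :=
| CZero : code
| CSucc : code
| CId : code
| CFst : code
| CSnd : code
| COracle : code
| CPair : code -> code -> code
| CComp : code -> code -> code
| CPrimRec : code -> code -> code    (* h<x,0> = f x ; h<x,n+1> = g <x,<n,h<x,n>>> *)
| CMu : code -> code.                (* z |-> least n with f<z,n> = 0 *)

Definition charf (A : nat -> Prop) (z v : nat) : Prop :=
  (A z /\ v = 1) \/ (~ A z /\ v = 0).

(** Big-step semantics with oracle [A]; every oracle query [q] made during
    the computation must satisfy [Q q] (take [Q := fun _ => True] for no
    restriction).  Since the semantics is deterministic, [evalq A Q c z y]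
    says: the computation of program [c] with oracle [A] on input [z]
    converges with output [y] and queries the oracle only on numbers in [Q]. *)
Inductive evalq (A : nat -> Prop) (Q : nat -> Prop) : code -> nat -> nat -> Prop :=
| ev_zero z : evalq A Q CZero z 0
| ev_succ z : evalq A Q CSucc z (S z)
| ev_id z : evalq A Q CId z z
| ev_fst z : evalq A Q CFst z (fst (of_nat z))
| ev_snd z : evalq A Q CSnd z (snd (of_nat z))
| ev_oracle z v : Q z -> charf A z v -> evalq A Q COracle z v
| ev_pair f g z a b :
    evalq A Q f z a -> evalq A Q g z b -> evalq A Q (CPair f g) z (to_nat (a, b))
| ev_comp f g z w y :
    evalq A Q g z w -> evalq A Q f w y -> evalq A Q (CComp f g) z y
| ev_prim0 f g z x y :
    of_nat z = (x, 0) -> evalq A Q f x y -> evalq A Q (CPrimRec f g) z y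
| ev_primS f g z x n r y :
    of_nat z = (x, S n) ->
    evalq A Q (CPrimRec f g) (to_nat (x, n)) r ->
    evalq A Q g (to_nat (x, to_nat (n, r))) y ->
    evalq A Q (CPrimRec f g) z y
| ev_mu f z n :
    evalq A Q f (to_nat (z, n)) 0 ->
    (forall m, m < n -> exists k, evalq A Q f (to_nat (z, m)) (S k)) ->
    evalq A Q (CMu f) z n.

(** Goedel numbering: total decoding of numbers into programs (surjective). *)
Fixpoint decode_aux (fuel e : nat) : code :=
  match fuel with
  | 0 => CZero
  | S k =>
    let (t, r) := of_nat e in
    match t with
    | 0 => CZero
    | 1 => CSucc
    | 2 => CId
    | 3 => CFst
    | 4 => CSnd
    | 5 => COracle
    | 6 => CPair (decode_aux k (fst (of_nat r))) (decode_aux k (snd (of_nat r)))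
    | 7 => CComp (decode_aux k (fst (of_nat r))) (decode_aux k (snd (of_nat r)))
    | 8 => CPrimRec (decode_aux k (fst (of_nat r))) (decode_aux k (snd (of_nat r)))
    | 9 => CMu (decode_aux k r)
    | _ => CZero
    end
  end.

Definition decode (e : nat) : code := decode_aux (S e) e.

Definition phiA (A : nat -> Prop) (e x y : nat) : Prop :=
  evalq A (fun _ => True) (decode e) x y.

Definition phi (e x y : nat) : Prop := phiA (fun _ => False) e x y.

Definition K (e : nat) : Prop := exists y, phi e e y.

Definition re (A : nat -> Prop) : Prop :=
  exists e, forall x, A x <-> exists y, phi e x y.

Definition computable (f : nat -> nat) : Prop :=
  exists e, forall x, phi e x (f x).

(** Canonical finite sets: D_n = { i | bit i of n is 1 }.  A function
    N -> P_fin(N) is represented by the map to canonical indices. *)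
Definition canon (n : nat) (i : nat) : Prop := Nat.testbit n i = true.

Definition D_weu (A : nat -> Prop) : Prop :=
  re A /\
  exists f : nat -> nat, computable f /\
    forall e,
      (forall z, canon (f e) z -> exists y, phi e z y) ->
      exists z, canon (f e) z /\ exists y, phi e z y /\ ~ charf A z y.

Definition wtt_complete (A : nat -> Prop) : Prop :=
  re A /\
  exists (e : nat) (f : nat -> nat), computable f /\
    forall x, exists y,
      charf K x y /\ phiA A e x y /\
      evalq A (fun q => q < f x) (decode e) x y.

From Stdlib Require Import Arith Cantor Lia List Classical ClassicalEpsilon Morphisms Setoid.

(** (wtt-complete => D-w.e.u.)  Let Gamma be a wtt-reduction of K to A with use
    bound u.  For an index e let g(e) be the program that, on input x, runs
    Gamma(x) answering oracle queries with phi_e and halts iff the answer is 0;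
    then g(e) is in K iff Gamma^{phi_e}(g(e)) = 0.  If phi_e agreed with 1_A
    below u(g(e)), Gamma^{phi_e}(g(e)) would equal 1_K(g(e)), which is absurd;
    so f(e) := {0, ..., u(g(e)) - 1} witnesses D-w.e.u.

    (D-w.e.u. => wtt-complete)  Let A_s be the stage-s approximation of A.  For
    each x let h(x) be an index of the program computing 1_{A_s}, where s is the
    stage at which x enters K (undefined if x is not in K), and take the use
    bound f(h(x)).  On input x, the reduction finds the least stage t at which
    A_t agrees with A below f(h(x)) and answers whether x is in K by stage t.
    If x enters K at a later stage s, then phi_{h(x)} = 1_{A_s} is total, so by
    D-w.e.u. it differs from 1_A at some z < f(h(x)); then z is in A but not in
    A_s, although z is already in A_t with t < s. *)

Arguments to_nat : simpl never.
Arguments of_nat : simpl never.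
Ltac simpl_cantor := repeat progress (rewrite ?cancel_of_to; cbn [fst snd]).
Local Open Scope bool_scope.

(* The derived induction principle of [evalq] gives no hypothesis for the
   premises of [ev_mu] under the [forall m, m < n -> exists k, _]. *)
Section EvalqInd.
Variables (A Q : nat -> Prop) (P : code -> nat -> nat -> Prop).
Hypotheses
 (Hzero : forall z, P CZero z 0)
 (Hsucc : forall z, P CSucc z (S z))
 (Hid : forall z, P CId z z)
 (Hfst : forall z, P CFst z (fst (of_nat z)))
 (Hsnd : forall z, P CSnd z (snd (of_nat z)))
 (Horacle : forall z v, Q z -> charf A z v -> P COracle z v)
 (Hpair : forall f g z a b, evalq A Q f z a -> P f z a -> evalq A Q g z b -> P g z b ->
    P (CPair f g) z (to_nat (a, b)))
 (Hcomp : forall f g z w y, evalq A Q g z w -> P g z w -> evalq A Q f w y -> P f w y ->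
    P (CComp f g) z y)
 (Hprim0 : forall f g z x y, of_nat z = (x, 0) -> evalq A Q f x y -> P f x y ->
    P (CPrimRec f g) z y)
 (HprimS : forall f g z x n r y, of_nat z = (x, S n) ->
    evalq A Q (CPrimRec f g) (to_nat (x, n)) r -> P (CPrimRec f g) (to_nat (x, n)) r ->
    evalq A Q g (to_nat (x, to_nat (n, r))) y -> P g (to_nat (x, to_nat (n, r))) y ->
    P (CPrimRec f g) z y)
 (Hmu : forall f z n, evalq A Q f (to_nat (z, n)) 0 -> P f (to_nat (z, n)) 0 ->
    (forall m, m < n -> exists k, evalq A Q f (to_nat (z, m)) (S k) /\ P f (to_nat (z, m)) (S k)) ->
    P (CMu f) z n).

Fixpoint evalq_nested_ind c z y (H : evalq A Q c z y) {struct H} : P c z y :=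
  match H in evalq _ _ c z y return P c z y with
  | ev_zero _ _ z => Hzero z
  | ev_succ _ _ z => Hsucc z
  | ev_id _ _ z => Hid z
  | ev_fst _ _ z => Hfst z
  | ev_snd _ _ z => Hsnd z
  | ev_oracle _ _ z v q ch => Horacle z v q ch
  | ev_pair _ _ f g z a b H1 H2 =>
      Hpair f g z a b H1 (evalq_nested_ind _ _ _ H1) H2 (evalq_nested_ind _ _ _ H2)
  | ev_comp _ _ f g z w y H1 H2 =>
      Hcomp f g z w y H1 (evalq_nested_ind _ _ _ H1) H2 (evalq_nested_ind _ _ _ H2)
  | ev_prim0 _ _ f g z x y e H1 => Hprim0 f g z x y e H1 (evalq_nested_ind _ _ _ H1)
  | ev_primS _ _ f g z x n r y e H1 H2 =>
      HprimS f g z x n r y e H1 (evalq_nested_ind _ _ _ H1) H2 (evalq_nested_ind _ _ _ H2)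
  | ev_mu _ _ f z n H0 Hl => Hmu f z n H0 (evalq_nested_ind _ _ _ H0)
      (fun m hm => match Hl m hm with
                   | ex_intro _ k Hk => ex_intro _ k (conj Hk (evalq_nested_ind _ _ _ Hk))
                   end)
  end.
End EvalqInd.

Lemma charf_functional A z v w : charf A z v -> charf A z w -> v = w.
Proof. unfold charf; intuition; subst; auto; contradiction. Qed.

Lemma evalq_functional A Q Q' c z y1 y2 :
  evalq A Q c z y1 -> evalq A Q' c z y2 -> y1 = y2.
Proof.
  intros H; revert Q' y2.
  induction H using evalq_nested_ind; intros Q' y2 H2; inversion H2; subst; auto;
  repeat match goal with
  | E1 : of_nat ?z = _, E2 : of_nat ?z = _ |- _ =>
      rewrite E1 in E2; injection E2; clear E2; intros; subst
  | E1 : of_nat ?z = _, E2 : of_nat ?z = _ |- _ => rewrite E1 in E2; discriminate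
  | IH : forall Q' y2, evalq _ Q' ?f ?z y2 -> ?v = y2, Hx : evalq _ _ ?f ?z ?w |- _ =>
      let e := fresh in pose proof (IH _ _ Hx) as e; clear Hx; subst
  end; auto; try congruence.
  - eapply charf_functional; eauto.
  - (* both [n] and [y2] are the least zero of the same function *)
    match goal with |- ?n = ?y2 => destruct (lt_eq_lt_dec n y2) as [[h|h]|h]; auto end.
    + match goal with Hl : forall m, m < y2 -> exists k, _ |- _ =>
        destruct (Hl _ h) as [k Hk] end.
      match goal with IH : forall Q' y2, evalq _ Q' f _ y2 -> 0 = y2 |- _ =>
        specialize (IH _ _ Hk); discriminate end.
    + match goal with Hl : forall m, m < n -> exists k, _ /\ _ |- _ =>
        destruct (Hl _ h) as [k [_ Hk]] end.
      match goal with Hx : evalq _ _ f _ 0 |- _ => specialize (Hk _ _ Hx); discriminate end.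
Qed.

Lemma evalq_mono A Q Q' c z y :
  evalq A Q c z y -> (forall q, Q q -> Q' q) -> evalq A Q' c z y.
Proof.
  intros H HQ. induction H using evalq_nested_ind.
  all: try (eapply ev_primS; eauto; fail).
  all: try (econstructor; eauto; fail).
  constructor; auto. intros m hm.
  match goal with Hl : forall m, m < _ -> _ |- _ => destruct (Hl m hm) as [k [_ Hk]] end; eauto.
Qed.

Lemma of_nat_le e t r : of_nat e = (t, r) -> r + t <= e.
Proof. intro H. rewrite <- (cancel_to_of e), H. apply to_nat_non_decreasing. Qed.

Lemma decode_aux_fuel_irrel k1 k2 e : e < k1 -> e < k2 -> decode_aux k1 e = decode_aux k2 e.
Proof.
  revert k2 e; induction k1 as [|k1 IH]; intros [|k2] e h1 h2; try lia.
  simpl. destruct (of_nat e) as [t r] eqn:E.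
  apply of_nat_le in E.
  destruct (of_nat r) as [r1 r2] eqn:E2. apply of_nat_le in E2. simpl.
  destruct t as [|[|[|[|[|[|[|[|[|[|t]]]]]]]]]]; auto;
  try (f_equal; apply IH; lia).
Qed.

Definition decode_step (e : nat) : code :=
  let (t, r) := of_nat e in
  match t with
  | 0 => CZero | 1 => CSucc | 2 => CId | 3 => CFst | 4 => CSnd | 5 => COracle
  | 6 => CPair (decode (fst (of_nat r))) (decode (snd (of_nat r)))
  | 7 => CComp (decode (fst (of_nat r))) (decode (snd (of_nat r)))
  | 8 => CPrimRec (decode (fst (of_nat r))) (decode (snd (of_nat r)))
  | 9 => CMu (decode r)
  | _ => CZero
  end.

Lemma decode_unfold e : decode e = decode_step e.
Proof.
  unfold decode, decode_step. simpl. destruct (of_nat e) as [t r] eqn:E.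
  apply of_nat_le in E.
  destruct (of_nat r) as [r1 r2] eqn:E2. apply of_nat_le in E2. simpl.
  destruct t as [|[|[|[|[|[|[|[|[|[|t]]]]]]]]]]; auto;
  try (unfold decode; f_equal; apply decode_aux_fuel_irrel; lia).
Qed.

Lemma decode_pair a b : decode (to_nat (6, to_nat (a, b))) = CPair (decode a) (decode b).
Proof. rewrite decode_unfold; unfold decode_step; simpl_cantor; reflexivity. Qed.
Lemma decode_comp a b : decode (to_nat (7, to_nat (a, b))) = CComp (decode a) (decode b).
Proof. rewrite decode_unfold; unfold decode_step; simpl_cantor; reflexivity. Qed.
Lemma decode_primrec a b : decode (to_nat (8, to_nat (a, b))) = CPrimRec (decode a) (decode b).
Proof. rewrite decode_unfold; unfold decode_step; simpl_cantor; reflexivity. Qed.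
Lemma decode_mu a : decode (to_nat (9, a)) = CMu (decode a).
Proof. rewrite decode_unfold; unfold decode_step; simpl_cantor; reflexivity. Qed.

Fixpoint encode (c : code) : nat :=
  match c with
  | CZero => to_nat (0, 0) | CSucc => to_nat (1, 0) | CId => to_nat (2, 0)
  | CFst => to_nat (3, 0) | CSnd => to_nat (4, 0) | COracle => to_nat (5, 0)
  | CPair f g => to_nat (6, to_nat (encode f, encode g))
  | CComp f g => to_nat (7, to_nat (encode f, encode g))
  | CPrimRec f g => to_nat (8, to_nat (encode f, encode g))
  | CMu f => to_nat (9, encode f)
  end.

Lemma decode_encode c : decode (encode c) = c.
Proof.
  induction c; cbn [encode];
  try (rewrite decode_unfold; unfold decode_step; rewrite cancel_of_to; reflexivity).
  all: try (rewrite ?decode_pair, ?decode_comp, ?decode_primrec, ?decode_mu; congruence).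
Qed.

Fixpoint c_const (n : nat) : code :=
  match n with 0 => CZero | S n => CComp CSucc (c_const n) end.
Lemma c_const_spec A Q n z : evalq A Q (c_const n) z n.
Proof. induction n; simpl; econstructor; eauto; constructor. Qed.

Fixpoint c_snds (n : nat) : code :=
  match n with 0 => CId | S n => CComp CSnd (c_snds n) end.

Fixpoint enc_env (l : list nat) : nat :=
  match l with nil => 0 | v :: l => to_nat (v, enc_env l) end.

Lemma ev_fst' A Q z y : y = fst (of_nat z) -> evalq A Q CFst z y.
Proof. intros ->; constructor. Qed.
Lemma ev_snd' A Q z y : y = snd (of_nat z) -> evalq A Q CSnd z y.
Proof. intros ->; constructor. Qed.
Lemma ev_pair' A Q f g z a b y :
  evalq A Q f z a -> evalq A Q g z b -> y = to_nat (a, b) -> evalq A Q (CPair f g) z y.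
Proof. intros ? ? ->; constructor; auto. Qed.
Lemma ev_succ' A Q z y : y = S z -> evalq A Q CSucc z y.
Proof. intros ->; constructor. Qed.
Lemma ev_id' A Q z y : y = z -> evalq A Q CId z y.
Proof. intros ->; constructor. Qed.

Lemma snd_enc_env l : snd (of_nat (enc_env l)) = enc_env (tl l).
Proof. destruct l; simpl; [reflexivity | rewrite cancel_of_to; reflexivity]. Qed.
Lemma fst_enc_env l : fst (of_nat (enc_env l)) = hd 0 l.
Proof. destruct l; simpl; [reflexivity | rewrite cancel_of_to; reflexivity]. Qed.
Lemma skipn_S_tl {X} n : forall (l : list X), skipn (S n) l = tl (skipn n l).
Proof. induction n; intros [|a l]; simpl; auto. rewrite <- IHn. destruct l; reflexivity. Qed.
Lemma nth_hd_skipn n : forall (l : list nat), nth n l 0 = hd 0 (skipn n l).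
Proof. induction n; intros [|a l]; simpl; auto. Qed.

Lemma c_snds_spec A Q n l : evalq A Q (c_snds n) (enc_env l) (enc_env (skipn n l)).
Proof.
  revert l; induction n; intros l; simpl. constructor.
  econstructor. apply IHn. apply ev_snd'. rewrite snd_enc_env, <- skipn_S_tl. reflexivity.
Qed.

Definition c_var n := CComp CFst (c_snds n).
Lemma c_var_spec A Q n l : evalq A Q (c_var n) (enc_env l) (nth n l 0).
Proof.
  econstructor; [apply c_snds_spec|]. apply ev_fst'. rewrite fst_enc_env, nth_hd_skipn; reflexivity.
Qed.

Lemma primrec_trace A Q f g x (H : nat -> nat) N :
  evalq A Q f x (H 0) ->
  (forall n, n < N -> evalq A Q g (to_nat (x, to_nat (n, H n))) (H (S n))) ->
  evalq A Q (CPrimRec f g) (to_nat (x, N)) (H N).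
Proof.
  intros H0 HS. induction N.
  - eapply ev_prim0; eauto. apply cancel_of_to.
  - eapply ev_primS. apply cancel_of_to. apply IHN; intros; apply HS; lia. apply HS; lia.
Qed.

Definition c_add := CPrimRec CId (CComp CSucc (CComp CSnd CSnd)).
Lemma c_add_spec A Q x n : evalq A Q c_add (to_nat (x, n)) (x + n).
Proof.
  apply (primrec_trace A Q _ _ x (fun n => x + n)). apply ev_id'; lia.
  intros k _. econstructor. econstructor; constructor.
  apply ev_succ'. simpl_cantor; lia.
Qed.

Definition c_pred := CComp (CPrimRec CZero (CComp CFst CSnd)) (CPair CZero CId).
Lemma c_pred_spec A Q m : evalq A Q c_pred m (pred m).
Proof.
  econstructor. econstructor; constructor.
  apply (primrec_trace A Q _ _ 0 pred). constructor.
  intros k _. econstructor. constructor. apply ev_fst'. simpl_cantor; reflexivity.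
Qed.

Definition c_sub := CPrimRec CId (CComp c_pred (CComp CSnd CSnd)).
Lemma c_sub_spec A Q x n : evalq A Q c_sub (to_nat (x, n)) (x - n).
Proof.
  apply (primrec_trace A Q _ _ x (fun n => x - n)). apply ev_id'; lia.
  intros k _. econstructor. econstructor; constructor.
  simpl_cantor; simpl. replace (x - S k) with (pred (x - k)) by lia. apply c_pred_spec.
Qed.

Definition is_zero (m : nat) := match m with 0 => 1 | _ => 0 end.
Definition c_is_zero := CComp (CPrimRec (CComp CSucc CZero) CZero) (CPair CZero CId).
Lemma c_is_zero_spec A Q m : evalq A Q c_is_zero m (is_zero m).
Proof.
  econstructor. econstructor; constructor.
  apply (primrec_trace A Q _ _ 0 is_zero). econstructor; constructor.
  intros k _. constructor.
Qed.

Definition nat_ite (c a b : nat) := match c with 0 => b | _ => a end.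
Definition c_if := CPrimRec CSnd (CComp CFst CFst).
Lemma c_if_spec A Q a b c : evalq A Q c_if (to_nat (to_nat (a, b), c)) (nat_ite c a b).
Proof.
  apply (primrec_trace A Q _ _ _ (fun c => nat_ite c a b)).
  - apply ev_snd'; rewrite cancel_of_to; reflexivity.
  - intros k _. econstructor; [constructor|]. apply ev_fst'. simpl_cantor; reflexivity.
Qed.

(** * A first-order expression language compiled to programs *)

(* Expressions are evaluated in an environment [env : list nat] (encoded by
   [enc_env]); [EIter n i s] iterates [s] [n] times from [i], with the
   previous value and the counter pushed on the environment. *)
Inductive expr : Type :=
| EVar (n : nat) | EConst (n : nat) | ESucc (e : expr) | EPair (a b : expr)
| EFst (e : expr) | ESnd (e : expr) | EAdd (a b : expr) | ESub (a b : expr)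
| EIsZ (e : expr) | EIf (c a b : expr) | EIter (n i s : expr) | EOracle (e : expr).

(* [den b] evaluates with oracle answers [b]; [oracle_ok A Q b] says that all
   queries made lie in [Q] and are answered by [b] as the oracle [A] would. *)
Section Den.
Variable b : nat -> nat.
Fixpoint den (e : expr) (env : list nat) : nat :=
  match e with
  | EVar n => nth n env 0
  | EConst n => n
  | ESucc e => S (den e env)
  | EPair x y => to_nat (den x env, den y env)
  | EFst e => fst (of_nat (den e env))
  | ESnd e => snd (of_nat (den e env))
  | EAdd x y => den x env + den y env
  | ESub x y => den x env - den y env
  | EIsZ e => is_zero (den e env)
  | EIf c x y => nat_ite (den c env) (den x env) (den y env)
  | EIter n i s =>
      (fix it (k : nat) : nat :=
         match k with 0 => den i env | S k => den s (it k :: k :: env) end) (den n env)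
  | EOracle e => b (den e env)
  end.
End Den.

Definition den_iterate b (i s : expr) env : nat -> nat :=
  fix it (k : nat) : nat :=
    match k with 0 => den b i env | S k => den b s (it k :: k :: env) end.

Section DenEquations.
Variable b : nat -> nat.
Lemma den_EVar n env : den b (EVar n) env = nth n env 0.
Proof. reflexivity. Qed.
Lemma den_EConst n env : den b (EConst n) env = n.
Proof. reflexivity. Qed.
Lemma den_ESucc e env : den b (ESucc e) env = S (den b e env).
Proof. reflexivity. Qed.
Lemma den_EPair x y env : den b (EPair x y) env = to_nat (den b x env, den b y env).
Proof. reflexivity. Qed.
Lemma den_EFst e env : den b (EFst e) env = fst (of_nat (den b e env)).
Proof. reflexivity. Qed.
Lemma den_ESnd e env : den b (ESnd e) env = snd (of_nat (den b e env)).
Proof. reflexivity. Qed.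
Lemma den_EAdd x y env : den b (EAdd x y) env = den b x env + den b y env.
Proof. reflexivity. Qed.
Lemma den_ESub x y env : den b (ESub x y) env = den b x env - den b y env.
Proof. reflexivity. Qed.
Lemma den_EIf c x y env : den b (EIf c x y) env = nat_ite (den b c env) (den b x env) (den b y env).
Proof. reflexivity. Qed.
Lemma den_EIter n i s env : den b (EIter n i s) env = den_iterate b i s env (den b n env).
Proof. reflexivity. Qed.
Lemma den_EOracle e env : den b (EOracle e) env = b (den b e env).
Proof. reflexivity. Qed.
End DenEquations.

Fixpoint oracle_ok (A Q : nat -> Prop) (b : nat -> nat) (e : expr) (env : list nat) : Prop :=
  match e with
  | EVar _ | EConst _ => True
  | ESucc e | EFst e | ESnd e | EIsZ e => oracle_ok A Q b e env
  | EPair x y | EAdd x y | ESub x y => oracle_ok A Q b x env /\ oracle_ok A Q b y env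
  | EIf c x y => oracle_ok A Q b c env /\ oracle_ok A Q b x env /\ oracle_ok A Q b y env
  | EIter n i s => oracle_ok A Q b n env /\ oracle_ok A Q b i env /\
      forall k, k < den b n env -> oracle_ok A Q b s (den_iterate b i s env k :: k :: env)
  | EOracle e =>
      oracle_ok A Q b e env /\ Q (den b e env) /\ charf A (den b e env) (b (den b e env))
  end.

Definition c_push2 := CPair (CComp CSnd CSnd) (CPair (CComp CFst CSnd) CFst).
Lemma c_push2_spec A Q env k v :
  evalq A Q c_push2 (to_nat (enc_env env, to_nat (k, v))) (enc_env (v :: k :: env)).
Proof.
  apply ev_pair' with v (enc_env (k :: env)); [| |reflexivity].
  - eapply ev_comp; [constructor|]. apply ev_snd'. simpl_cantor; reflexivity.
  - apply ev_pair' with k (enc_env env); [| |reflexivity].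
    + econstructor; [constructor|]. apply ev_fst'. simpl_cantor; reflexivity.
    + apply ev_fst'. simpl_cantor; reflexivity.
Qed.

Fixpoint compile (e : expr) : code :=
  match e with
  | EVar n => c_var n
  | EConst n => c_const n
  | ESucc e => CComp CSucc (compile e)
  | EPair x y => CPair (compile x) (compile y)
  | EFst e => CComp CFst (compile e)
  | ESnd e => CComp CSnd (compile e)
  | EAdd x y => CComp c_add (CPair (compile x) (compile y))
  | ESub x y => CComp c_sub (CPair (compile x) (compile y))
  | EIsZ e => CComp c_is_zero (compile e)
  | EIf c x y => CComp c_if (CPair (CPair (compile x) (compile y)) (compile c))
  | EIter n i s => CComp (CPrimRec (compile i) (CComp (compile s) c_push2)) (CPair CId (compile n))
  | EOracle e => CComp COracle (compile e)
  end.

Lemma compile_correct A Q b e env :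
  oracle_ok A Q b e env -> evalq A Q (compile e) (enc_env env) (den b e env).
Proof.
  revert env; induction e; intros env Hok; simpl in Hok |- *.
  - apply c_var_spec.
  - apply c_const_spec.
  - econstructor; eauto. constructor.
  - destruct Hok; constructor; auto.
  - econstructor; eauto. constructor.
  - econstructor; eauto. constructor.
  - destruct Hok. econstructor. constructor; eauto. apply c_add_spec.
  - destruct Hok. econstructor. constructor; eauto. apply c_sub_spec.
  - econstructor; eauto. apply c_is_zero_spec.
  - destruct Hok as (?&?&?). econstructor. constructor. constructor; eauto. eauto. apply c_if_spec.
  - destruct Hok as (?&?&Hs). econstructor. constructor. constructor. eauto.
    apply (primrec_trace A Q _ _ _ (den_iterate b e2 e3 env)). simpl; auto.
    intros k hk. econstructor; [apply c_push2_spec | apply (IHe3 _ (Hs k hk))].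
  - destruct Hok as (?&?&?). econstructor; eauto. constructor; auto.
Qed.

Fixpoint oracle_free (e : expr) : Prop :=
  match e with
  | EVar _ | EConst _ => True
  | ESucc e | EFst e | ESnd e | EIsZ e => oracle_free e
  | EPair x y | EAdd x y | ESub x y => oracle_free x /\ oracle_free y
  | EIf c x y => oracle_free c /\ oracle_free x /\ oracle_free y
  | EIter n i s => oracle_free n /\ oracle_free i /\ oracle_free s
  | EOracle e => False
  end.

Lemma oracle_free_ok A Q b e env : oracle_free e -> oracle_ok A Q b e env.
Proof. revert env; induction e; simpl; intuition. Qed.

Definition den0 := den (fun _ => 0).

Lemma compile_correct0 A Q e env :
  oracle_free e -> evalq A Q (compile e) (enc_env env) (den0 e env).
Proof. intro H. apply compile_correct, oracle_free_ok, H. Qed.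

Fixpoint shift (c d : nat) (e : expr) : expr :=
  match e with
  | EVar n => EVar (if n <? c then n else n + d)
  | EConst n => EConst n
  | ESucc e => ESucc (shift c d e)
  | EPair x y => EPair (shift c d x) (shift c d y)
  | EFst e => EFst (shift c d e)
  | ESnd e => ESnd (shift c d e)
  | EAdd x y => EAdd (shift c d x) (shift c d y)
  | ESub x y => ESub (shift c d x) (shift c d y)
  | EIsZ e => EIsZ (shift c d e)
  | EIf x y z => EIf (shift c d x) (shift c d y) (shift c d z)
  | EIter n i s => EIter (shift c d n) (shift c d i) (shift (S (S c)) d s)
  | EOracle e => EOracle (shift c d e)
  end.

Lemma den_shift b e pre mid env :
  den b (shift (length pre) (length mid) e) (pre ++ mid ++ env) = den b e (pre ++ env).
Proof.
  revert pre; induction e; intros pre; simpl; try congruence.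
  - destruct (Nat.ltb_spec n (length pre)).
    + rewrite !app_nth1; auto.
    + rewrite !app_nth2 by (try rewrite length_app; lia). f_equal; lia.
  - rewrite IHe1, IHe2.
    induction (den b e1 (pre ++ env)); simpl; auto.
    rewrite IHn. apply (IHe3 (_ :: _ :: pre)).
Qed.

Definition shift1 := shift 0 1.
Lemma den_shift1 b e x env : den b (shift1 e) (x :: env) = den b e env.
Proof. apply (den_shift b e nil (x :: nil)). Qed.

Fixpoint oracle_freeb (e : expr) : bool :=
  match e with
  | EVar _ | EConst _ => true
  | ESucc e | EFst e | ESnd e | EIsZ e => oracle_freeb e
  | EPair x y | EAdd x y | ESub x y => oracle_freeb x && oracle_freeb y
  | EIf c x y => oracle_freeb c && oracle_freeb x && oracle_freeb y
  | EIter n i s => oracle_freeb n && oracle_freeb i && oracle_freeb s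
  | EOracle e => false
  end.
Lemma oracle_freeb_spec e : oracle_freeb e = true -> oracle_free e.
Proof. induction e; simpl; intros; rewrite ?Bool.andb_true_iff in *; intuition. Qed.

Definition nonzerob (x : nat) : bool := negb (x =? 0).
Lemma nonzerob_spec x : nonzerob x = true <-> x <> 0.
Proof. unfold nonzerob; destruct x; simpl; split; congruence. Qed.

Fixpoint existsb_lt (n : nat) (f : nat -> bool) : bool :=
  match n with 0 => false | S n => existsb_lt n f || f n end.
Fixpoint forallb_lt (n : nat) (f : nat -> bool) : bool :=
  match n with 0 => true | S n => forallb_lt n f && f n end.

Lemma existsb_lt_spec n f : existsb_lt n f = true <-> exists i, i < n /\ f i = true.
Proof.
  induction n; simpl. split; [discriminate| intros (i&h&_); lia].
  rewrite Bool.orb_true_iff, IHn. split.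
  - intros [(i&h&H)|H]; eauto.
  - intros (i&h&H). destruct (Nat.eq_dec i n); subst; auto. left; exists i; split; auto; lia.
Qed.
Lemma forallb_lt_spec n f : forallb_lt n f = true <-> forall i, i < n -> f i = true.
Proof.
  induction n; simpl. split; auto; intros; lia.
  rewrite Bool.andb_true_iff, IHn. split.
  - intros [H1 H2] i h. destruct (Nat.eq_dec i n); subst; auto. apply H1; lia.
  - intros H; split; auto.
Qed.

Definition ETrue := EConst 1.
Definition EAnd (x y : expr) := EIf x (EIf y ETrue (EConst 0)) (EConst 0).
Definition EOr (x y : expr) := EIf x ETrue (EIf y ETrue (EConst 0)).
Definition ENz (x : expr) := EIsZ (EIsZ x).
Definition EEq (x y : expr) := EIsZ (EAdd (ESub x y) (ESub y x)).
Definition EEx (n P : expr) := EIter n (EConst 0) (EIf (EVar 0) ETrue (ENz (shift1 P))).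
Definition EAll (n P : expr) := EIsZ (EEx n (EIsZ P)).

Lemma nonzerob_b2n x : nonzerob (Nat.b2n x) = x.
Proof. destruct x; reflexivity. Qed.

Section DerivedDen.
Variable b : nat -> nat.
Lemma den_EAnd x y env :
  den b (EAnd x y) env = Nat.b2n (nonzerob (den b x env) && nonzerob (den b y env)).
Proof. simpl. destruct (den b x env), (den b y env); reflexivity. Qed.
Lemma den_EOr x y env :
  den b (EOr x y) env = Nat.b2n (nonzerob (den b x env) || nonzerob (den b y env)).
Proof. simpl. destruct (den b x env), (den b y env); reflexivity. Qed.
Lemma den_ENz x env : den b (ENz x) env = Nat.b2n (nonzerob (den b x env)).
Proof. simpl. destruct (den b x env); reflexivity. Qed.
Lemma den_EIsZ x env : den b (EIsZ x) env = Nat.b2n (negb (nonzerob (den b x env))).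
Proof. simpl. destruct (den b x env); reflexivity. Qed.
Lemma den_EEq x y env : den b (EEq x y) env = Nat.b2n (den b x env =? den b y env).
Proof.
  simpl. destruct (Nat.eqb_spec (den b x env) (den b y env)).
  - rewrite e, Nat.sub_diag; reflexivity.
  - destruct (den b x env - den b y env + (den b y env - den b x env)) eqn:E; [lia|reflexivity].
Qed.
Lemma den_EEx n P env :
  den b (EEx n P) env =
  Nat.b2n (existsb_lt (den b n env) (fun j => nonzerob (den b P (j :: env)))).
Proof.
  unfold EEx. rewrite den_EIter. induction (den b n env); simpl. reflexivity.
  fold (den_iterate b (EConst 0) (EIf (EVar 0) ETrue (ENz (shift1 P))) env n0).
  rewrite IHn0. rewrite den_shift1. destruct (existsb_lt n0 _); simpl; auto.
  destruct (den b P (n0 :: env)); reflexivity.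
Qed.
Lemma den_EAll n P env :
  den b (EAll n P) env =
  Nat.b2n (forallb_lt (den b n env) (fun j => nonzerob (den b P (j :: env)))).
Proof.
  unfold EAll. rewrite den_EIsZ, den_EEx, nonzerob_b2n. f_equal.
  induction (den b n env) as [|k IHk]; cbn [existsb_lt forallb_lt]; auto.
  rewrite Bool.negb_orb, IHk, den_EIsZ. destruct (nonzerob (den b P (k :: env))); reflexivity.
Qed.
End DerivedDen.

(* Lets [rewrite_strat] rewrite under the binder of a bounded quantifier. *)
#[export] Instance existsb_lt_proper : Proper (eq ==> pointwise_relation nat eq ==> eq) existsb_lt.
Proof. intros n m <- f g H; induction n; simpl; congruence. Qed.
#[export] Instance forallb_lt_proper : Proper (eq ==> pointwise_relation nat eq ==> eq) forallb_lt.
Proof. intros n m <- f g H; induction n; simpl; congruence. Qed.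

(** * Certificates of halting *)

(* A triple <e, z, y> claims phi_e(z) = y.  A certificate is a list of triples
   each of which follows from earlier ones by the evaluation rule of the head
   constructor of its program; then "phi_e(z) is defined" becomes "some
   certificate contains a triple <e, z, _>", which is decidable once the
   certificate is bounded.  This is the Kleene normal form used below. *)

Definition triple e z y := to_nat (e, to_nat (z, y)).
Definition tr_code x := fst (of_nat x).
Definition tr_input x := fst (of_nat (snd (of_nat x))).
Definition tr_output x := snd (of_nat (snd (of_nat x))).
Lemma tr_code_triple e z y : tr_code (triple e z y) = e.
Proof. unfold tr_code, triple; simpl_cantor; auto. Qed.
Lemma tr_input_triple e z y : tr_input (triple e z y) = z.
Proof. unfold tr_input, triple; simpl_cantor; auto. Qed.
Lemma tr_output_triple e z y : tr_output (triple e z y) = y.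
Proof. unfold tr_output, triple; simpl_cantor; auto. Qed.
Lemma triple_tr x : triple (tr_code x) (tr_input x) (tr_output x) = x.
Proof.
  unfold triple, tr_code, tr_input, tr_output.
  rewrite <- surjective_pairing, cancel_to_of, <- surjective_pairing, cancel_to_of. auto.
Qed.
Ltac simpl_triple := rewrite ?tr_code_triple, ?tr_input_triple, ?tr_output_triple in *.

(* Lists of numbers coded as numbers: 0 is nil and S <h, t> is h :: t. *)
Definition ntl L := snd (of_nat (pred L)).
Definition nhd L := fst (of_nat (pred L)).
Definition nskip i L := Nat.iter i ntl L.
Definition nnth L i := nhd (nskip i L).
Fixpoint encode_list (l : list nat) : nat :=
  match l with nil => 0 | h :: t => S (to_nat (h, encode_list t)) end.

(* [justified n P]: the triple [n] follows from triples satisfying [P].  The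
   oracle rule (tag 5) answers 0, the oracle being empty in [phi]. *)
Definition justified (n : nat) (P : nat -> Prop) : Prop :=
  let z := tr_input n in let y := tr_output n in
  match of_nat (tr_code n) with (t, r) =>
  match t with
  | 0 => y = 0 | 1 => y = S z | 2 => y = z
  | 3 => y = fst (of_nat z) | 4 => y = snd (of_nat z) | 5 => y = 0
  | 6 => P (triple (fst (of_nat r)) z (fst (of_nat y))) /\
         P (triple (snd (of_nat r)) z (snd (of_nat y)))
  | 7 => exists w, P (triple (snd (of_nat r)) z w) /\ P (triple (fst (of_nat r)) w y)
  | 8 => match snd (of_nat z) with
         | 0 => P (triple (fst (of_nat r)) (fst (of_nat z)) y)
         | S m => exists w, P (triple (tr_code n) (to_nat (fst (of_nat z), m)) w) /\
                  P (triple (snd (of_nat r)) (to_nat (fst (of_nat z), to_nat (m, w))) y)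
         end
  | 9 => P (triple r (to_nat (z, y)) 0) /\
         forall m, m < y -> exists k, P (triple r (to_nat (z, m)) (S k))
  | _ => y = 0
  end end.

Lemma justified_triple e z y P : justified (triple e z y) P =
  match of_nat e with (t, r) =>
  match t with
  | 0 => y = 0 | 1 => y = S z | 2 => y = z
  | 3 => y = fst (of_nat z) | 4 => y = snd (of_nat z) | 5 => y = 0
  | 6 => P (triple (fst (of_nat r)) z (fst (of_nat y))) /\
         P (triple (snd (of_nat r)) z (snd (of_nat y)))
  | 7 => exists w, P (triple (snd (of_nat r)) z w) /\ P (triple (fst (of_nat r)) w y)
  | 8 => match snd (of_nat z) with
         | 0 => P (triple (fst (of_nat r)) (fst (of_nat z)) y)
         | S m => exists w, P (triple e (to_nat (fst (of_nat z), m)) w) /\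
                  P (triple (snd (of_nat r)) (to_nat (fst (of_nat z), to_nat (m, w))) y)
         end
  | 9 => P (triple r (to_nat (z, y)) 0) /\
         forall m, m < y -> exists k, P (triple r (to_nat (z, m)) (S k))
  | _ => y = 0
  end end.
Proof. unfold justified. simpl_triple. reflexivity. Qed.

Lemma justified_mono n (P P' : nat -> Prop) :
  justified n P -> (forall x, P x -> P' x) -> justified n P'.
Proof.
  unfold justified. destruct (of_nat (tr_code n)) as [t r].
  destruct t as [|[|[|[|[|[|[|[|[|[|t]]]]]]]]]]; intros H HP; auto.
  - destruct H; auto.
  - destruct H as (w&?&?); eauto.
  - destruct (snd (of_nat (tr_input n))); auto. destruct H as (w&?&?); eauto.
  - destruct H as [H1 H2]; split; auto. intros m hm; destruct (H2 m hm) as [k ?]; eauto.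
Qed.

Definition no_oracle : nat -> Prop := fun _ => False.
Definition any_query : nat -> Prop := fun _ => True.
Definition true_triple x :=
  evalq no_oracle any_query (decode (tr_code x)) (tr_input x) (tr_output x).

Lemma justified_sound n P : justified n P -> (forall x, P x -> true_triple x) -> true_triple n.
Proof.
  unfold justified, true_triple. intros H HP. rewrite decode_unfold. unfold decode_step.
  destruct (of_nat (tr_code n)) as [t r] eqn:E.
  destruct t as [|[|[|[|[|[|[|[|[|[|t]]]]]]]]]];
    try (rewrite H; constructor; try exact I; try (right; split; auto); fail).
  - destruct H as [H1 H2]. apply HP in H1, H2. unfold true_triple in *. simpl_triple.
    rewrite <- (cancel_to_of (tr_output n)), (surjective_pairing (of_nat (tr_output n))).
    constructor; auto.
  - destruct H as (w&H1&H2). apply HP in H1, H2. unfold true_triple in *. simpl_triple.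
    econstructor; eauto.
  - destruct (snd (of_nat (tr_input n))) as [|m] eqn:Ez.
    + apply HP in H. unfold true_triple in *. simpl_triple.
      eapply ev_prim0; eauto. rewrite (surjective_pairing (of_nat (tr_input n))), Ez; reflexivity.
    + destruct H as (w&H1&H2). apply HP in H1, H2. unfold true_triple in *. simpl_triple.
      rewrite decode_unfold in H1. unfold decode_step in H1. rewrite E in H1.
      eapply ev_primS; eauto. rewrite (surjective_pairing (of_nat (tr_input n))), Ez; reflexivity.
  - destruct H as [H1 H2]. apply HP in H1. unfold true_triple in *. simpl_triple.
    constructor; auto. intros m hm. destruct (H2 m hm) as [k Hk]. apply HP in Hk.
    unfold true_triple in Hk. simpl_triple. eauto.
Qed.

Definition premise L i x := exists j, j < i /\ nnth L j = x.
Definition valid_cert L :=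
  forall i, i < L -> nskip i L <> 0 -> justified (nnth L i) (premise L i).
Definition cert_mem L x := exists i, i < L /\ nskip i L <> 0 /\ nnth L i = x.

Lemma nskip_0 k : nskip k 0 = 0.
Proof. induction k; simpl; auto. unfold nskip in *; simpl. rewrite IHk. reflexivity. Qed.
Lemma nskip_add a b L : nskip (a + b) L = nskip a (nskip b L).
Proof. unfold nskip. apply Nat.iter_add. Qed.
Lemma nskip_nonzero_le j i L : j <= i -> nskip i L <> 0 -> nskip j L <> 0.
Proof.
  intros h H E. replace i with ((i - j) + j) in H by lia. rewrite nskip_add, E, nskip_0 in H. auto.
Qed.

Lemma valid_cert_sound L i : valid_cert L -> i < L -> nskip i L <> 0 -> true_triple (nnth L i).
Proof.
  intros HV. induction i as [i IH] using lt_wf_ind. intros hi hn.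
  apply (justified_sound _ _ (HV i hi hn)). intros x (j&hj&<-). apply IH; auto; try lia.
  eapply nskip_nonzero_le; [|eauto]; lia.
Qed.

Lemma cert_mem_sound L x : valid_cert L -> cert_mem L x -> true_triple x.
Proof. intros HV (i&h1&h2&<-). apply valid_cert_sound; auto. Qed.

Definition valid_list (l : list nat) :=
  forall i, i < length l -> justified (nth i l 0) (fun x => exists j, j < i /\ nth j l 0 = x).
Definition derivable x := exists l, valid_list l /\ In x l.

Lemma valid_list_app l1 l2 : valid_list l1 -> valid_list l2 -> valid_list (l1 ++ l2).
Proof.
  intros H1 H2 i hi. rewrite length_app in hi.
  destruct (Nat.ltb_spec i (length l1)).
  - rewrite app_nth1 by auto. eapply justified_mono. apply H1; auto.
    intros x (j&hj&<-). exists j; split; auto. rewrite app_nth1 by lia; auto.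
  - rewrite app_nth2 by auto. eapply justified_mono. apply H2; lia.
    intros x (j&hj&<-). exists (length l1 + j); split; [lia|]. rewrite app_nth2 by lia.
    f_equal; lia.
Qed.

Lemma valid_list_snoc l n :
  valid_list l -> justified n (fun x => In x l) -> valid_list (l ++ n :: nil).
Proof.
  intros H1 H2 i hi. rewrite length_app in hi; simpl in hi.
  destruct (Nat.ltb_spec i (length l)).
  - rewrite app_nth1 by auto. eapply justified_mono. apply H1; auto.
    intros x (j&hj&<-). exists j; split; auto. rewrite app_nth1 by lia; auto.
  - assert (i = length l) by lia. subst. rewrite nth_middle. eapply justified_mono; eauto.
    intros x Hx. destruct (In_nth _ _ 0 Hx) as (j&hj&<-). exists j; split; auto.
    rewrite app_nth1; auto.
Qed.

Lemma derivable_of_list l n : valid_list l -> justified n (fun x => In x l) -> derivable n.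
Proof.
  intros Hl Hn. exists (l ++ n :: nil). split.
  - apply valid_list_snoc; auto.
  - apply in_or_app; right; left; reflexivity.
Qed.

Lemma derivable_app x1 x2 : derivable x1 -> derivable x2 ->
  exists l, valid_list l /\ In x1 l /\ In x2 l.
Proof.
  intros (l1&V1&I1) (l2&V2&I2). exists (l1 ++ l2).
  split; [apply valid_list_app; auto | split; apply in_or_app; auto].
Qed.

Lemma derivable_mu r z n :
  (forall m, m < n -> exists k, derivable (triple r (to_nat (z, m)) (S k))) ->
  exists l, valid_list l /\ forall m, m < n -> exists k, In (triple r (to_nat (z, m)) (S k)) l.
Proof.
  induction n; intros H.
  - exists nil; split. intros i h; simpl in h; lia. intros; lia.
  - destruct IHn as (l1&V1&I1). intros; apply H; lia.
    destruct (H n) as (k&l2&V2&I2). lia.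
    exists (l1 ++ l2); split. apply valid_list_app; auto.
    intros m hm. destruct (Nat.eq_dec m n); subst.
    + exists k; apply in_or_app; auto.
    + destruct (I1 m) as [k' ?]. lia. exists k'; apply in_or_app; auto.
Qed.

Ltac invert_decode H := rewrite decode_unfold in H; unfold decode_step in H;
  destruct (of_nat _) as [tt rr] eqn:E in H;
  destruct tt as [|[|[|[|[|[|[|[|[|[|tt]]]]]]]]]]; try discriminate H.

Lemma evalq_derivable c z y : evalq no_oracle any_query c z y ->
  forall e, decode e = c -> derivable (triple e z y).
Proof.
  intro H. induction H using evalq_nested_ind; intros e He.
  all: try (apply (derivable_of_list nil); [intros i h; simpl in h; lia|];
            rewrite justified_triple; invert_decode He; rewrite E; auto; fail).
  - apply (derivable_of_list nil); [intros i h; simpl in h; lia|].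
    rewrite justified_triple. invert_decode He. rewrite E.
    destruct H0 as [[[] _]|[_ ->]]; auto.
  - invert_decode He. injection He; intros; subst.
    destruct (derivable_app _ _ (IHevalq1 _ eq_refl) (IHevalq2 _ eq_refl)) as (l&V&I1&I2).
    apply (derivable_of_list l); auto. rewrite justified_triple, E. simpl_cantor. auto.
  - invert_decode He. injection He; intros; subst.
    destruct (derivable_app _ _ (IHevalq1 _ eq_refl) (IHevalq2 _ eq_refl)) as (l&V&I1&I2).
    apply (derivable_of_list l); auto. rewrite justified_triple, E. eauto.
  - invert_decode He. injection He; intros; subst.
    destruct (IHevalq _ eq_refl) as (l&V&I).
    apply (derivable_of_list l); auto. rewrite justified_triple, E, H. simpl_cantor. auto.
  - pose proof (IHevalq1 _ He) as D1. invert_decode He. injection He; intros; subst.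
    destruct (derivable_app _ _ D1 (IHevalq2 _ eq_refl)) as (l&V&I1&I2).
    apply (derivable_of_list l); auto. rewrite justified_triple, E, H. simpl_cantor. eauto.
  - invert_decode He. injection He; intros; subst.
    destruct (IHevalq _ eq_refl) as (l1&V1&I1).
    destruct (derivable_mu rr z n) as (l2&V2&I2).
    { intros m hm. match goal with Hl : forall m, m < n -> exists k, _ |- _ =>
        destruct (Hl m hm) as (k&_&Hk) end. eauto. }
    apply (derivable_of_list (l1 ++ l2)); [apply valid_list_app; auto|].
    rewrite justified_triple, E. split; [apply in_or_app; auto|].
    intros m hm. destruct (I2 m hm) as [k ?]. exists k; apply in_or_app; auto.
Qed.

Lemma ntl_encode_list l : ntl (encode_list l) = encode_list (tl l).
Proof. destruct l; unfold ntl; simpl; auto. simpl_cantor. auto. Qed.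
Lemma nskip_encode_list i l : nskip i (encode_list l) = encode_list (skipn i l).
Proof.
  revert l; induction i; intros l; auto. unfold nskip in *; simpl.
  rewrite IHi, ntl_encode_list, <- skipn_S_tl. reflexivity.
Qed.
Lemma nhd_encode_list l : nhd (encode_list l) = hd 0 l.
Proof. destruct l; unfold nhd; simpl; auto. simpl_cantor. auto. Qed.
Lemma nnth_encode_list l i : nnth (encode_list l) i = nth i l 0.
Proof. unfold nnth. rewrite nskip_encode_list, nhd_encode_list, nth_hd_skipn. reflexivity. Qed.
Lemma encode_list_length l : length l <= encode_list l.
Proof. induction l; simpl; auto. pose proof (to_nat_non_decreasing a (encode_list l)). lia. Qed.
Lemma nskip_encode_list_nonzero l i : nskip i (encode_list l) <> 0 <-> i < length l.
Proof.
  rewrite nskip_encode_list. split.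
  - intros H. destruct (Nat.ltb_spec i (length l)); auto.
    rewrite skipn_all2 in H by auto. simpl in H; lia.
  - intros H. destruct (skipn i l) eqn:E; simpl; try lia.
    apply (f_equal (@length nat)) in E. rewrite length_skipn in E. simpl in E. lia.
Qed.

Lemma valid_list_cert l : valid_list l -> valid_cert (encode_list l).
Proof.
  intros H i _ hn. apply nskip_encode_list_nonzero in hn. rewrite nnth_encode_list.
  eapply justified_mono. apply H; auto.
  intros x (j&hj&<-). exists j; split; auto. rewrite nnth_encode_list; auto.
Qed.

Lemma In_cert_mem l x : In x l -> cert_mem (encode_list l) x.
Proof.
  intros Hx. destruct (In_nth _ _ 0 Hx) as (i&hi&<-). exists i. split.
  - pose proof (encode_list_length l); lia.
  - split; [apply nskip_encode_list_nonzero; auto | apply nnth_encode_list].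
Qed.

Theorem phi_defined_cert e z :
  (exists y, phi e z y) <-> exists L, valid_cert L /\ exists y, cert_mem L (triple e z y).
Proof.
  split.
  - intros (y&Hy). destruct (evalq_derivable _ _ _ Hy e eq_refl) as (l&V&I).
    exists (encode_list l); split; [apply valid_list_cert; auto|].
    exists y. apply In_cert_mem; auto.
  - intros (L&V&y&M). exists y. pose proof (cert_mem_sound _ _ V M) as H.
    unfold true_triple in H. simpl_triple. exact H.
Qed.

(* Each decision procedure [foob] comes with an oracle-free expression [EFoo]
   computing it, so that it can be run inside programs. *)

Lemma nat_ite_b2n c x y :
  nat_ite (Nat.b2n c) (Nat.b2n x) (Nat.b2n y) = Nat.b2n (if c then x else y).
Proof. destruct c; reflexivity. Qed.

Definition ESkip (L i : expr) : expr := EIter i L (ESnd (ESub (EVar 0) (EConst 1))).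
Lemma den_ESkip b L i env : den b (ESkip L i) env = nskip (den b i env) (den b L env).
Proof.
  unfold ESkip. rewrite den_EIter.
  induction (den b i env); simpl. reflexivity.
  rewrite IHn. unfold nskip. simpl. unfold ntl. rewrite Nat.sub_1_r. reflexivity.
Qed.

Definition ENth (L i : expr) : expr := EFst (ESub (ESkip L i) (EConst 1)).
Lemma den_ENth b L i env : den b (ENth L i) env = nnth (den b L env) (den b i env).
Proof. unfold ENth, nnth, nhd. rewrite den_EFst, den_ESub, den_ESkip, Nat.sub_1_r. reflexivity. Qed.

Definition ETriple a x y := EPair a (EPair x y).
Lemma den_ETriple b a x y env :
  den b (ETriple a x y) env = triple (den b a env) (den b x env) (den b y env).
Proof. reflexivity. Qed.

Lemma nth_cons_0 (x : nat) l d : nth 0 (x :: l) d = x.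
Proof. reflexivity. Qed.
Lemma nth_cons_1 (x y : nat) l d : nth 1 (x :: y :: l) d = y.
Proof. reflexivity. Qed.

Hint Rewrite nth_cons_0 nth_cons_1 den_EPair den_EVar den_EConst den_ESucc den_EFst den_ESnd
  den_EAdd den_ESub den_EIf den_ENth den_ESkip den_ETriple den_EAnd den_EOr den_ENz den_EIsZ
  den_EEq den_EEx den_EAll den_shift1 nat_ite_b2n nonzerob_b2n : den.

Definition premiseb L i x := existsb_lt i (fun j => nnth L j =? x).
Definition EPremise (L i x : expr) := EEx i (EEq (ENth (shift1 L) (EVar 0)) (shift1 x)).

Lemma den_EPremise b L i x env :
  den b (EPremise L i x) env = Nat.b2n (premiseb (den b L env) (den b i env) (den b x env)).
Proof. unfold EPremise, premiseb. rewrite_strat (topdown (hints den)). reflexivity. Qed.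
Hint Rewrite den_EPremise : den.

Lemma premiseb_spec L i x : premiseb L i x = true <-> premise L i x.
Proof.
  unfold premiseb, premise. rewrite existsb_lt_spec.
  split; intros (j&h&H); exists j; split; auto; apply Nat.eqb_eq; auto.
Qed.

(* Existentially quantified intermediate values are searched among the
   earlier entries of the certificate. *)
Definition justifiedb (L i : nat) : bool :=
  let n := nnth L i in
  let e := tr_code n in let t := fst (of_nat e) in let r := snd (of_nat e) in
  let e1 := fst (of_nat r) in let e2 := snd (of_nat r) in
  let z := tr_input n in let y := tr_output n in
  let earlier (e' z' : nat) (F : nat -> bool) :=
    existsb_lt i (fun j => (tr_code (nnth L j) =? e') &&
                           ((tr_input (nnth L j) =? z') && F (tr_output (nnth L j)))) in
  if t =? 0 then y =? 0 else
  if t =? 1 then y =? S z else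
  if t =? 2 then y =? z else
  if t =? 3 then y =? fst (of_nat z) else
  if t =? 4 then y =? snd (of_nat z) else
  if t =? 5 then y =? 0 else
  if t =? 6 then premiseb L i (triple e1 z (fst (of_nat y))) &&
                 premiseb L i (triple e2 z (snd (of_nat y))) else
  if t =? 7 then earlier e2 z (fun w => premiseb L i (triple e1 w y)) else
  if t =? 8 then
    (if snd (of_nat z) =? 0 then premiseb L i (triple e1 (fst (of_nat z)) y) else
     earlier e (to_nat (fst (of_nat z), snd (of_nat z) - 1))
       (fun w => premiseb L i
          (triple e2 (to_nat (fst (of_nat z), to_nat (snd (of_nat z) - 1, w))) y))) else
  if t =? 9 then premiseb L i (triple r (to_nat (z, y)) 0) &&
                 forallb_lt y (fun m => earlier r (to_nat (z, m)) nonzerob)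
  else y =? 0.

Definition EJustified (L i : expr) : expr :=
  let n := ENth L i in
  let e := EFst n in let t := EFst e in let r := ESnd e in let e1 := EFst r in let e2 := ESnd r in
  let z := EFst (ESnd n) in let y := ESnd (ESnd n) in
  let tg k := EEq t (EConst k) in
  EIf (tg 0) (EEq y (EConst 0))
 (EIf (tg 1) (EEq y (ESucc z))
 (EIf (tg 2) (EEq y z)
 (EIf (tg 3) (EEq y (EFst z))
 (EIf (tg 4) (EEq y (ESnd z))
 (EIf (tg 5) (EEq y (EConst 0))
 (EIf (tg 6) (EAnd (EPremise L i (ETriple e1 z (EFst y))) (EPremise L i (ETriple e2 z (ESnd y))))
 (EIf (tg 7) (EEx i (EAnd (EEq (EFst (ENth (shift1 L) (EVar 0))) (shift1 e2))
                    (EAnd (EEq (EFst (ESnd (ENth (shift1 L) (EVar 0)))) (shift1 z))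
                          (EPremise (shift1 L) (shift1 i)
                             (ETriple (shift1 e1) (ESnd (ESnd (ENth (shift1 L) (EVar 0))))
                                (shift1 y))))))
 (EIf (tg 8) (EIf (EEq (ESnd z) (EConst 0)) (EPremise L i (ETriple e1 (EFst z) y))
       (EEx i (EAnd (EEq (EFst (ENth (shift1 L) (EVar 0))) (shift1 e))
                (EAnd (EEq (EFst (ESnd (ENth (shift1 L) (EVar 0))))
                           (EPair (shift1 (EFst z)) (ESub (shift1 (ESnd z)) (EConst 1))))
                  (EPremise (shift1 L) (shift1 i) (ETriple (shift1 e2)
                     (EPair (shift1 (EFst z))
                        (EPair (ESub (shift1 (ESnd z)) (EConst 1))
                           (ESnd (ESnd (ENth (shift1 L) (EVar 0))))))
                     (shift1 y)))))))
 (EIf (tg 9) (EAnd (EPremise L i (ETriple r (EPair z y) (EConst 0)))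
        (EAll y (EEx (shift1 i)
           (EAnd (EEq (EFst (ENth (shift1 (shift1 L)) (EVar 0))) (shift1 (shift1 r)))
             (EAnd (EEq (EFst (ESnd (ENth (shift1 (shift1 L)) (EVar 0))))
                        (EPair (shift1 (shift1 z)) (EVar 1)))
                   (ENz (ESnd (ESnd (ENth (shift1 (shift1 L)) (EVar 0))))))))))
 (EEq y (EConst 0))))))))))).

Lemma den_EJustified b L i env :
  den b (EJustified L i) env = Nat.b2n (justifiedb (den b L env) (den b i env)).
Proof.
  unfold EJustified. cbv zeta. rewrite_strat (topdown (hints den)).
  unfold justifiedb, tr_code, tr_input, tr_output, triple. cbv zeta. reflexivity.
Qed.
Hint Rewrite den_EJustified : den.

Lemma existsb_premise L i e z (F : nat -> bool) (G : nat -> Prop) :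
  (forall w, F w = true <-> G w) ->
  (existsb_lt i (fun j => (tr_code (nnth L j) =? e) &&
                          ((tr_input (nnth L j) =? z) && F (tr_output (nnth L j)))) = true <->
   exists w, premise L i (triple e z w) /\ G w).
Proof.
  intros HF. rewrite existsb_lt_spec. split.
  - intros (j&hj&H). rewrite !Bool.andb_true_iff, !Nat.eqb_eq in H. destruct H as (<-&<-&H).
    exists (tr_output (nnth L j)). split; [|apply HF; auto].
    exists j; split; auto. symmetry; apply triple_tr.
  - intros (w&(j&hj&Hj)&Hw). exists j; split; auto.
    rewrite Hj. simpl_triple. rewrite !Nat.eqb_refl. apply HF; auto.
Qed.

Lemma justifiedb_spec L i : justifiedb L i = true <-> justified (nnth L i) (premise L i).
Proof.
  unfold justifiedb, justified. cbv zeta. set (n := nnth L i).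
  destruct (of_nat (tr_code n)) as [t r] eqn:E. cbn [fst snd].
  destruct t as [|[|[|[|[|[|[|[|[|[|t]]]]]]]]]];
    cbn -[premiseb existsb_lt forallb_lt nonzerob]; try apply Nat.eqb_eq.
  - rewrite Bool.andb_true_iff, !premiseb_spec. reflexivity.
  - apply (existsb_premise _ _ _ _
             (fun w => premiseb L i (triple (fst (of_nat r)) w (tr_output n)))).
    intros; apply premiseb_spec.
  - destruct (snd (of_nat (tr_input n))) as [|m];
      cbn -[premiseb existsb_lt forallb_lt nonzerob]; [apply premiseb_spec|].
    rewrite Nat.sub_0_r.
    apply (existsb_premise _ _ _ _ (fun w => premiseb L i
             (triple (snd (of_nat r)) (to_nat (fst (of_nat (tr_input n)), to_nat (m, w)))
                (tr_output n)))).
    intros; apply premiseb_spec.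
  - rewrite Bool.andb_true_iff, premiseb_spec, forallb_lt_spec. apply and_iff_compat_l.
    split; intros H m hm; specialize (H m hm).
    + apply (existsb_premise _ _ _ _ _ _ nonzerob_spec) in H. destruct H as ([|k]&Hp&Hw).
      * congruence.
      * eauto.
    + apply (existsb_premise _ _ _ _ _ _ nonzerob_spec).
      destruct H as (k&Hk). exists (S k); split; auto.
Qed.

Definition valid_certb L :=
  forallb_lt L (fun i => negb (nonzerob (nskip i L)) || justifiedb L i).
Definition cert_memb L e z :=
  existsb_lt L (fun i => nonzerob (nskip i L) &&
                         ((tr_code (nnth L i) =? e) && (tr_input (nnth L i) =? z))).
Definition halts_byb e z t := existsb_lt (S t) (fun L => valid_certb L && cert_memb L e z).

Definition EValidCert L :=
  EAll L (EOr (EIsZ (ESkip (shift1 L) (EVar 0))) (EJustified (shift1 L) (EVar 0))).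
Definition ECertMem L e z :=
  EEx L (EAnd (ENz (ESkip (shift1 L) (EVar 0)))
    (EAnd (EEq (EFst (ENth (shift1 L) (EVar 0))) (shift1 e))
          (EEq (EFst (ESnd (ENth (shift1 L) (EVar 0)))) (shift1 z)))).
Definition EHaltsBy e z t :=
  EEx (ESucc t) (EAnd (EValidCert (EVar 0)) (ECertMem (EVar 0) (shift1 e) (shift1 z))).

Lemma den_EHaltsBy b e z t env :
  den b (EHaltsBy e z t) env = Nat.b2n (halts_byb (den b e env) (den b z env) (den b t env)).
Proof.
  unfold EHaltsBy, EValidCert, ECertMem. rewrite_strat (topdown (hints den)).
  unfold cert_memb, tr_code, tr_input. reflexivity.
Qed.

Lemma valid_certb_spec L : valid_certb L = true <-> valid_cert L.
Proof.
  unfold valid_certb, valid_cert. rewrite forallb_lt_spec.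
  split; intros H i hi; specialize (H i hi); rewrite Bool.orb_true_iff in *.
  - intros hn. apply justifiedb_spec. destruct H as [H|H]; auto.
    apply Bool.negb_true_iff, Bool.not_true_iff_false in H. rewrite nonzerob_spec in H. tauto.
  - destruct (nskip i L) eqn:E; [left; reflexivity|].
    right. apply justifiedb_spec, H. congruence.
Qed.

Lemma cert_memb_spec L e z : cert_memb L e z = true <-> exists y, cert_mem L (triple e z y).
Proof.
  unfold cert_memb, cert_mem. rewrite existsb_lt_spec. split.
  - intros (i&hi&H). rewrite !Bool.andb_true_iff, !Nat.eqb_eq, nonzerob_spec in H.
    destruct H as (H1&<-&<-). exists (tr_output (nnth L i)), i.
    repeat split; auto. symmetry. apply triple_tr.
  - intros (y&i&hi&hn&H). exists i; split; auto.
    rewrite H, !Bool.andb_true_iff, !Nat.eqb_eq, nonzerob_spec. simpl_triple. auto.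
Qed.

Definition halts_by e z t :=
  exists L, L <= t /\ valid_cert L /\ exists y, cert_mem L (triple e z y).

Lemma halts_byb_spec e z t : halts_byb e z t = true <-> halts_by e z t.
Proof.
  unfold halts_byb, halts_by. rewrite existsb_lt_spec.
  split; intros (L&h&H); exists L; (split; [lia|]);
    rewrite Bool.andb_true_iff, valid_certb_spec, cert_memb_spec in *; auto.
Qed.

Lemma halts_byb_false e z t : halts_byb e z t = false <-> ~ halts_by e z t.
Proof. rewrite <- halts_byb_spec. destruct (halts_byb e z t); split; congruence. Qed.

Lemma halts_by_mono e z t t' : t <= t' -> halts_by e z t -> halts_by e z t'.
Proof. intros h (L&h1&H). exists L; split; [lia|auto]. Qed.

Lemma halts_by_phi e z : (exists t, halts_by e z t) <-> exists y, phi e z y.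
Proof.
  rewrite phi_defined_cert. split.
  - intros (t&L&_&H). eauto.
  - intros (L&H). exists L, L. split; auto.
Qed.

Fixpoint plug (c X : code) : code :=
  match c with
  | COracle => X
  | CPair f g => CPair (plug f X) (plug g X)
  | CComp f g => CComp (plug f X) (plug g X)
  | CPrimRec f g => CPrimRec (plug f X) (plug g X)
  | CMu f => CMu (plug f X)
  | c => c
  end.

Lemma plug_correct A Q c z y X : evalq A Q c z y ->
  (forall q v, Q q -> charf A q v -> evalq no_oracle any_query X q v) ->
  evalq no_oracle any_query (plug c X) z y.
Proof.
  intros H HX. induction H using evalq_nested_ind; simpl; try (econstructor; eauto; fail).
  all: try (eapply ev_primS; eauto; fail).
  all: try (apply HX; auto; fail).
  constructor; auto. intros m hm. destruct (H0 m hm) as (k&_&?); eauto.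
Qed.

Fixpoint plug_index (c : code) (n : nat) : nat :=
  match c with
  | COracle => n
  | CPair f g => to_nat (6, to_nat (plug_index f n, plug_index g n))
  | CComp f g => to_nat (7, to_nat (plug_index f n, plug_index g n))
  | CPrimRec f g => to_nat (8, to_nat (plug_index f n, plug_index g n))
  | CMu f => to_nat (9, plug_index f n)
  | c => encode c
  end.

Lemma decode_plug_index c n : decode (plug_index c n) = plug c (decode n).
Proof.
  induction c; simpl; try apply decode_encode; auto.
  all: rewrite ?decode_pair, ?decode_comp, ?decode_primrec, ?decode_mu; congruence.
Qed.

Fixpoint EPlugIndex (c : code) : expr :=
  match c with
  | COracle => EVar 0
  | CPair f g => EPair (EConst 6) (EPair (EPlugIndex f) (EPlugIndex g))
  | CComp f g => EPair (EConst 7) (EPair (EPlugIndex f) (EPlugIndex g))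
  | CPrimRec f g => EPair (EConst 8) (EPair (EPlugIndex f) (EPlugIndex g))
  | CMu f => EPair (EConst 9) (EPlugIndex f)
  | c => EConst (encode c)
  end.

Lemma EPlugIndex_oracle_free c : oracle_free (EPlugIndex c).
Proof. induction c; simpl; auto. Qed.
Lemma den_EPlugIndex c n : den0 (EPlugIndex c) (n :: nil) = plug_index c n.
Proof. induction c; simpl; auto; unfold den0 in *; simpl; congruence. Qed.

Definition c_env1 := CPair CId CZero.
Lemma c_env1_spec A Q x : evalq A Q c_env1 x (enc_env (x :: nil)).
Proof. apply ev_pair' with x 0; constructor. Qed.

(** * wtt-complete sets are D-w.e.u. *)

Lemma canon_ones m z : canon (Nat.ones m) z <-> z < m.
Proof.
  unfold canon. split; intros H.
  - destruct (Nat.lt_ge_cases z m) as [|h]; auto.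
    rewrite Nat.ones_spec_high in H; auto; discriminate.
  - apply Nat.ones_spec_low; auto.
Qed.

Definition EOnes := EIter (EVar 0) (EConst 0) (ESucc (EAdd (EVar 0) (EVar 0))).
Lemma den_EOnes m : den0 EOnes (m :: nil) = Nat.ones m.
Proof.
  unfold den0, EOnes. rewrite den_EIter. cbn [den nth]. generalize (m :: nil) as env.
  induction m as [|k IHk]; intros env; [reflexivity|].
  simpl den_iterate. simpl den. rewrite IHk, !Nat.ones_equiv. simpl.
  pose proof (Nat.pow_nonzero 2 k). lia.
Qed.

Section WttCompleteDweu.
Variables (A : nat -> Prop) (e_red e_use : nat) (use : nat -> nat).
Hypothesis Huse : forall x, phi e_use x (use x).
Hypothesis Hred :
  forall x, exists y, charf K x y /\ evalq A (fun q => q < use x) (decode e_red) x y.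

Definition red := decode e_red.

(* On input x, [diag_prog e] halts iff the reduction, with phi_e as oracle,
   outputs 0 on x; [diag_index e] is its index. *)
Definition diag_prog (e : nat) := CMu (CComp (plug red (decode e)) CFst).
Definition diag_index (e : nat) :=
  to_nat (9, to_nat (7, to_nat (plug_index red e, encode CFst))).

Lemma decode_diag_index e : decode (diag_index e) = diag_prog e.
Proof.
  unfold diag_index, diag_prog.
  rewrite decode_mu, decode_comp, decode_plug_index, decode_encode. reflexivity.
Qed.

Definition EDiagIndex :=
  EPair (EConst 9) (EPair (EConst 7) (EPair (EPlugIndex red) (EConst (encode CFst)))).
Lemma den_EDiagIndex e : den0 EDiagIndex (e :: nil) = diag_index e.
Proof.
  unfold EDiagIndex, diag_index, den0. simpl den.
  fold (den0 (EPlugIndex red) (e :: nil)). rewrite den_EPlugIndex. reflexivity.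
Qed.
Lemma EDiagIndex_oracle_free : oracle_free EDiagIndex.
Proof. simpl. pose proof (EPlugIndex_oracle_free red). tauto. Qed.

Lemma diag_prog_halts e x y :
  evalq no_oracle any_query (plug red (decode e)) x y ->
  ((exists n, phi (diag_index e) x n) <-> y = 0).
Proof.
  intros Hsim. unfold phi, phiA. rewrite decode_diag_index. split.
  - intros (n&Hn). inversion Hn; subst.
    match goal with H : evalq _ _ (CComp _ CFst) _ 0 |- _ => inversion H; subst end.
    match goal with H : evalq _ _ CFst _ _ |- _ => inversion H; subst end.
    match goal with H : evalq _ _ (plug _ _) _ 0 |- _ => rewrite cancel_of_to in H end.
    eapply evalq_functional; eauto.
  - intros ->. exists 0. constructor; [|intros; lia].
    econstructor; [constructor|]. rewrite cancel_of_to. exact Hsim.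
Qed.

Definition bound (e : nat) := Nat.ones (use (diag_index e)).
Definition bound_prog :=
  CComp (compile EOnes)
    (CPair (CComp (decode e_use) (CComp (compile EDiagIndex) c_env1)) CZero).

Lemma bound_prog_spec e : phi (encode bound_prog) e (bound e).
Proof.
  unfold phi, phiA, bound. rewrite decode_encode. unfold bound_prog.
  econstructor.
  - apply ev_pair' with (use (diag_index e)) 0; [|constructor|reflexivity].
    apply ev_comp with (diag_index e); [|apply Huse].
    apply ev_comp with (enc_env (e :: nil)); [apply c_env1_spec|].
    rewrite <- (den_EDiagIndex e). apply compile_correct0, EDiagIndex_oracle_free.
  - rewrite <- den_EOnes. apply (compile_correct0 _ _ _ (_ :: nil)). simpl; auto.
Qed.

Lemma wtt_complete_D_weu : exists f : nat -> nat, computable f /\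
  forall e,
    (forall z, canon (f e) z -> exists y, phi e z y) ->
    exists z, canon (f e) z /\ exists y, phi e z y /\ ~ charf A z y.
Proof.
  exists bound. split; [exists (encode bound_prog); apply bound_prog_spec|].
  intros e Htot. apply NNPP. intros Hno. unfold bound in *. set (x := diag_index e) in *.
  assert (Hagree : forall z y, z < use x -> phi e z y -> charf A z y).
  { intros z y hz Hy. apply NNPP. intros Hc. apply Hno. exists z.
    split; [apply canon_ones; auto | eauto]. }
  destruct (Hred x) as (y0&HK&Hev).
  assert (Hsim : evalq no_oracle any_query (plug red (decode e)) x y0).
  { apply (plug_correct A (fun q => q < use x)); auto.
    intros q v hq Hv. destruct (Htot q) as (y&Hy); [apply canon_ones; auto|].
    rewrite (charf_functional _ _ _ _ Hv (Hagree q y hq Hy)). exact Hy. }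
  pose proof (diag_prog_halts e x y0 Hsim) as Hhalt.
  destruct HK as [[HK ->]|[HK ->]].
  - apply Hhalt in HK. discriminate.
  - apply HK, Hhalt. reflexivity.
Qed.
End WttCompleteDweu.

(** * D-w.e.u. sets are wtt-complete *)

Lemma least_witness (P : nat -> Prop) :
  (exists n, P n) -> exists n, P n /\ forall m, m < n -> ~ P m.
Proof.
  intros [n Hn]. induction n as [n IH] using lt_wf_ind.
  destruct (classic (exists m, m < n /\ P m)) as [(m&hm&Pm)|H].
  - apply (IH m hm Pm).
  - exists n; split; auto. intros m hm Pm; apply H; eauto.
Qed.

Lemma canon_lt m z : canon m z -> z < m.
Proof.
  unfold canon. intros H. destruct (Nat.ltb_spec z m); auto.
  destruct m. rewrite Nat.bits_0 in H; discriminate.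
  rewrite Nat.bits_above_log2 in H. discriminate. pose proof (Nat.log2_lt_lin (S m)). lia.
Qed.

Fixpoint drop_oracle (c : code) : code :=
  match c with
  | COracle => CZero
  | CPair f g => CPair (drop_oracle f) (drop_oracle g)
  | CComp f g => CComp (drop_oracle f) (drop_oracle g)
  | CPrimRec f g => CPrimRec (drop_oracle f) (drop_oracle g)
  | CMu f => CMu (drop_oracle f)
  | c => c
  end.

Lemma drop_oracle_correct A Q c z y :
  evalq no_oracle any_query c z y -> evalq A Q (drop_oracle c) z y.
Proof.
  intros H. induction H using evalq_nested_ind; simpl; try (econstructor; eauto; fail).
  all: try (eapply ev_primS; eauto; fail).
  - destruct H0 as [[[] _]|[_ ->]]. constructor.
  - constructor; auto. intros m hm. destruct (H0 m hm) as (k&_&?); eauto.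
Qed.

Lemma oracle_ok_shift A Q b e pre mid env :
  oracle_ok A Q b (shift (length pre) (length mid) e) (pre ++ mid ++ env) <->
  oracle_ok A Q b e (pre ++ env).
Proof.
  revert pre; induction e; intros pre; simpl;
    rewrite ?IHe, ?IHe1, ?IHe2, ?IHe3, ?den_shift; try tauto.
  apply and_iff_compat_l, and_iff_compat_l.
  assert (Hit : forall k, den_iterate b (shift (length pre) (length mid) e2)
                  (shift (S (S (length pre))) (length mid) e3) (pre ++ mid ++ env) k =
                den_iterate b e2 e3 (pre ++ env) k).
  { intros k. exact (den_shift b (EIter (EConst k) e2 e3) pre mid env). }
  split; intros H k hk; specialize (H k hk); rewrite Hit in *;
    apply (IHe3 (_ :: _ :: pre)); exact H.
Qed.

Lemma oracle_ok_EAll A Q b n P env :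
  oracle_ok A Q b n env -> (forall j, j < den b n env -> oracle_ok A Q b P (j :: env)) ->
  oracle_ok A Q b (EAll n P) env.
Proof.
  intros Hn HP. unfold EAll, EEx, ENz, shift1. cbn [oracle_ok].
  repeat split; auto. apply (oracle_ok_shift _ _ _ _ nil (_ :: nil)), HP; assumption.
Qed.

Definition c_env2 := CPair CFst (CPair CSnd CZero).
Lemma c_env2_spec A Q a b : evalq A Q c_env2 (to_nat (a, b)) (enc_env (a :: b :: nil)).
Proof.
  apply ev_pair' with a (to_nat (b, 0)). apply ev_fst'; simpl_cantor; auto.
  apply ev_pair' with b 0. apply ev_snd'; simpl_cantor; auto. constructor. reflexivity. reflexivity.
Qed.
Definition c_env3 := CPair (CComp CFst CFst) (CPair (CComp CSnd CFst) (CPair CSnd CZero)).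
Lemma c_env3_spec A Q a b c :
  evalq A Q c_env3 (to_nat (to_nat (a, b), c)) (enc_env (a :: b :: c :: nil)).
Proof.
  apply ev_pair' with a (to_nat (b, to_nat (c, 0))).
  apply ev_comp with (to_nat (a, b)); apply ev_fst'; simpl_cantor; auto.
  apply ev_pair' with b (to_nat (c, 0)).
  apply ev_comp with (to_nat (a, b)); [apply ev_fst' | apply ev_snd']; simpl_cantor; auto.
  apply ev_pair' with c 0. apply ev_snd'; simpl_cantor; auto. constructor.
  all: reflexivity.
Qed.

Lemma nth_cons_S (x : nat) n l d : nth (S n) (x :: l) d = nth n l d.
Proof. reflexivity. Qed.
Hint Rewrite den_EOracle nth_cons_S den_EHaltsBy : den.

Definition char_fun (A : nat -> Prop) (z : nat) : nat :=
  if excluded_middle_informative (A z) then 1 else 0.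
Lemma char_fun_charf A z : charf A z (char_fun A z).
Proof. unfold char_fun, charf. destruct (excluded_middle_informative (A z)); auto. Qed.

Section DweuWttComplete.
Variables (A : nat -> Prop) (e_A e_f : nat) (f : nat -> nat).
Hypothesis HA : forall x, A x <-> exists y, phi e_A x y.
Hypothesis Hf : forall e, phi e_f e (f e).
Hypothesis Hweu : forall e,
  (forall z, canon (f e) z -> exists y, phi e z y) ->
  exists z, canon (f e) z /\ exists y, phi e z y /\ ~ charf A z y.

(* Stage t of the enumeration of A is [fun z => halts_by e_A z t]. *)
Lemma halts_by_A z t : halts_by e_A z t -> A z.
Proof. intros H. apply HA, halts_by_phi. eauto. Qed.

Lemma stage_covers_below m : exists T, forall z, z < m -> A z -> halts_by e_A z T.
Proof.
  induction m as [|m (T1&H1)]; [exists 0; intros; lia|].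
  destruct (classic (A m)) as [Am|Am].
  - destruct (proj2 (halts_by_phi e_A m) (proj1 (HA m) Am)) as [tm Hm].
    exists (Nat.max T1 tm). intros z hz Az. destruct (Nat.eq_dec z m) as [->|].
    + apply (halts_by_mono _ _ tm); auto; lia.
    + apply (halts_by_mono _ _ T1); [lia|]. apply H1; auto; lia.
  - exists T1. intros z hz Az. destruct (Nat.eq_dec z m) as [->|]; [contradiction|].
    apply H1; auto; lia.
Qed.

(* [halt_stage] computes the least stage at which x enters K, and
   [approx_prog x] the characteristic function of A at that stage. *)
Definition EHaltStage := EIsZ (EHaltsBy (EVar 0) (EVar 0) (EVar 1)).
Definition halt_stage := CMu (CComp (compile EHaltStage) c_env2).
Definition EApproxBody := EHaltsBy (EConst e_A) (EVar 0) (EVar 1).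
Definition approx_body :=
  CComp (compile EApproxBody) (CPair CFst (CPair (CComp halt_stage CSnd) CZero)).
Definition approx_prog x := CComp approx_body (CPair CId (c_const x)).
Definition approx_index x := encode (approx_prog x).

Lemma EHaltStage_oracle_free : oracle_free EHaltStage.
Proof. apply oracle_freeb_spec; vm_compute; reflexivity. Qed.
Lemma EApproxBody_oracle_free : oracle_free EApproxBody.
Proof. apply oracle_freeb_spec; vm_compute; reflexivity. Qed.
Lemma den_EHaltStage x t :
  den0 EHaltStage (x :: t :: nil) = is_zero (Nat.b2n (halts_byb x x t)).
Proof.
  unfold EHaltStage, den0. rewrite_strat (topdown (hints den)).
  destruct (halts_byb x x t); reflexivity.
Qed.
Lemma den_EApproxBody z s : den0 EApproxBody (z :: s :: nil) = Nat.b2n (halts_byb e_A z s).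
Proof. unfold EApproxBody, den0. rewrite_strat (topdown (hints den)). reflexivity. Qed.

Lemma halt_stage_spec Q x s : halts_by x x s -> (forall t, t < s -> ~ halts_by x x t) ->
  evalq no_oracle Q halt_stage x s.
Proof.
  intros H1 H2. unfold halt_stage. constructor.
  - econstructor; [apply c_env2_spec|]. apply halts_byb_spec in H1.
    replace 0 with (den0 EHaltStage (x :: s :: nil)).
    + apply compile_correct0, EHaltStage_oracle_free.
    + rewrite den_EHaltStage, H1. reflexivity.
  - intros t ht. exists 0. econstructor; [apply c_env2_spec|].
    replace 1 with (den0 EHaltStage (x :: t :: nil)).
    + apply compile_correct0, EHaltStage_oracle_free.
    + rewrite den_EHaltStage, (proj2 (halts_byb_false _ _ _) (H2 t ht)). reflexivity.
Qed.

Lemma approx_prog_spec x s z : halts_by x x s -> (forall t, t < s -> ~ halts_by x x t) ->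
  phi (approx_index x) z (Nat.b2n (halts_byb e_A z s)).
Proof.
  intros H1 H2. unfold phi, phiA, approx_index. rewrite decode_encode. unfold approx_prog.
  apply ev_comp with (to_nat (z, x)).
  - apply ev_pair' with z x; [constructor | apply c_const_spec | reflexivity].
  - unfold approx_body. apply ev_comp with (enc_env (z :: s :: nil)).
    + apply ev_pair' with z (to_nat (s, 0)); [apply ev_fst'; simpl_cantor; auto | | reflexivity].
      apply ev_pair' with s 0; [| constructor | reflexivity].
      apply ev_comp with x; [apply ev_snd'; simpl_cantor; auto | apply halt_stage_spec; auto].
    + rewrite <- den_EApproxBody. apply compile_correct0, EApproxBody_oracle_free.
Qed.

Lemma approx_misses x s : halts_by x x s -> (forall t, t < s -> ~ halts_by x x t) ->
  exists z, z < f (approx_index x) /\ A z /\ ~ halts_by e_A z s.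
Proof.
  intros H1 H2.
  destruct (Hweu (approx_index x)) as (z&Hz&y&Hy&Hc).
  { intros z _. eexists. apply approx_prog_spec; eauto. }
  rewrite (evalq_functional _ _ _ _ _ _ _ Hy (approx_prog_spec x s z H1 H2)) in Hc.
  exists z. split; [apply canon_lt; auto|].
  destruct (halts_byb e_A z s) eqn:Es.
  - exfalso. apply Hc. left. split; [apply (halts_by_A z s), halts_byb_spec, Es | reflexivity].
  - split; [|apply halts_byb_false, Es].
    apply NNPP. intros nA. apply Hc. right. split; auto.
Qed.

Definition EConstIndex :=
  EIter (EVar 0) (EConst (encode CZero))
    (EPair (EConst 7) (EPair (EConst (encode CSucc)) (EVar 0))).
Definition EApproxIndex :=
  EPair (EConst 7) (EPair (EConst (encode approx_body))
    (EPair (EConst 6) (EPair (EConst (encode CId)) EConstIndex))).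

Lemma den_EConstIndex x : den0 EConstIndex (x :: nil) = encode (c_const x).
Proof.
  unfold EConstIndex, den0. rewrite den_EIter. cbn [den nth]. generalize (x :: nil) as env.
  induction x as [|k IHk]; intros env; [reflexivity|].
  simpl den_iterate. simpl den. rewrite IHk. reflexivity.
Qed.
Lemma den_EApproxIndex x : den0 EApproxIndex (x :: nil) = approx_index x.
Proof.
  change (den0 EApproxIndex (x :: nil)) with
    (to_nat (7, to_nat (encode approx_body,
       to_nat (6, to_nat (encode CId, den0 EConstIndex (x :: nil)))))).
  rewrite den_EConstIndex. reflexivity.
Qed.
Lemma EApproxIndex_oracle_free : oracle_free EApproxIndex.
Proof. simpl; tauto. Qed.

Definition use x := f (approx_index x).
Definition use_prog := CComp (decode e_f) (CComp (compile EApproxIndex) c_env1).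

Lemma use_prog_spec x : evalq no_oracle any_query use_prog x (use x).
Proof.
  unfold use_prog. apply ev_comp with (approx_index x); [|apply Hf].
  apply ev_comp with (enc_env (x :: nil)); [apply c_env1_spec|].
  rewrite <- den_EApproxIndex. apply compile_correct0, EApproxIndex_oracle_free.
Qed.

Definition agreeb m t := forallb_lt m (fun z => Nat.b2n (halts_byb e_A z t) =? char_fun A z).
Definition EAgree :=
  EAll (EVar 1) (EEq (EHaltsBy (EConst e_A) (EVar 0) (EVar 3)) (EOracle (EVar 0))).

Lemma agreeb_exists m : exists t, agreeb m t = true.
Proof.
  destruct (stage_covers_below m) as [T H]. exists T.
  apply forallb_lt_spec. intros z hz. apply Nat.eqb_eq.
  unfold char_fun. destruct (excluded_middle_informative (A z)) as [Az|Az].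
  - rewrite (proj2 (halts_byb_spec _ _ _) (H z hz Az)). reflexivity.
  - destruct (halts_byb e_A z T) eqn:E; auto.
    exfalso. apply Az, (halts_by_A z T), halts_byb_spec, E.
Qed.

Lemma den_EAgree x m t :
  den (char_fun A) (EIsZ EAgree) (x :: m :: t :: nil) = Nat.b2n (negb (agreeb m t)).
Proof. unfold EAgree, agreeb. rewrite_strat (topdown (hints den)). reflexivity. Qed.

Lemma EAgree_oracle_ok (Q : nat -> Prop) x m t : (forall q, q < m -> Q q) ->
  oracle_ok A Q (char_fun A) (EIsZ EAgree) (x :: m :: t :: nil).
Proof.
  intros HQ. apply oracle_ok_EAll; cbn [oracle_ok den nth]; auto.
  intros j hj. assert (HR : oracle_free (EHaltsBy (EConst e_A) (EVar 0) (EVar 3))).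
  { apply oracle_freeb_spec; vm_compute; reflexivity. }
  pose proof (oracle_free_ok A Q (char_fun A) _ (j :: x :: m :: t :: nil) HR).
  pose proof (char_fun_charf A j). assert (Q j) by (apply HQ; exact hj).
  unfold EEq. cbn [oracle_ok den nth]. tauto.
Qed.

Definition disagree_prog := CComp (compile (EIsZ EAgree)) c_env3.
Lemma disagree_prog_spec (Q : nat -> Prop) x m t : (forall q, q < m -> Q q) ->
  evalq A Q disagree_prog (to_nat (to_nat (x, m), t)) (Nat.b2n (negb (agreeb m t))).
Proof.
  intros HQ. unfold disagree_prog. apply ev_comp with (enc_env (x :: m :: t :: nil)).
  - apply c_env3_spec.
  - rewrite <- (den_EAgree x). apply compile_correct, EAgree_oracle_ok, HQ.
Qed.

Definition EOutput := EHaltsBy (EVar 0) (EVar 0) (EVar 1).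
Lemma EOutput_oracle_free : oracle_free EOutput.
Proof. apply oracle_freeb_spec; vm_compute; reflexivity. Qed.
Lemma den_EOutput x t : den0 EOutput (x :: t :: nil) = Nat.b2n (halts_byb x x t).
Proof. unfold EOutput, den0. rewrite_strat (topdown (hints den)). reflexivity. Qed.

(* On input x: find the least t with [agreeb (use x) t], and answer whether x
   is in K by stage t. *)
Definition settle_stage := CComp (CMu disagree_prog) (CPair CId (drop_oracle use_prog)).
Definition wtt_prog := CComp (compile EOutput) (CPair CId (CPair settle_stage CZero)).

Lemma wtt_prog_eval x t :
  agreeb (use x) t = true -> (forall t', t' < t -> agreeb (use x) t' <> true) ->
  evalq A (fun q => q < use x) wtt_prog x (Nat.b2n (halts_byb x x t)).
Proof.
  intros Ht Hmin. unfold wtt_prog. apply ev_comp with (enc_env (x :: t :: nil)).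
  - apply ev_pair' with x (to_nat (t, 0)); [constructor | | reflexivity].
    apply ev_pair' with t 0; [| constructor | reflexivity].
    unfold settle_stage. apply ev_comp with (to_nat (x, use x)).
    + apply ev_pair' with x (use x); [constructor | | reflexivity].
      apply drop_oracle_correct, use_prog_spec.
    + constructor.
      * replace 0 with (Nat.b2n (negb (agreeb (use x) t))) by (rewrite Ht; reflexivity).
        apply disagree_prog_spec; auto.
      * intros t' ht'. exists 0. replace 1 with (Nat.b2n (negb (agreeb (use x) t'))).
        -- apply disagree_prog_spec; auto.
        -- destruct (agreeb (use x) t') eqn:E; auto. exfalso; apply (Hmin t'); auto.
  - rewrite <- (den_EOutput x t). apply compile_correct0, EOutput_oracle_free.
Qed.

Lemma agreeb_decides_K x t : agreeb (use x) t = true -> charf K x (Nat.b2n (halts_byb x x t)).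
Proof.
  intros Ht. destruct (halts_byb x x t) eqn:E; [left | right]; split; auto.
  - apply halts_by_phi. exists t. apply halts_byb_spec, E.
  - intros HK. apply halts_by_phi in HK.
    destruct (least_witness _ HK) as (s&Hs&Hsmin).
    destruct (approx_misses x s Hs Hsmin) as (z&hz&Az&Hz).
    assert (Hzt : halts_by e_A z t).
    { unfold agreeb in Ht. rewrite forallb_lt_spec in Ht. specialize (Ht z hz).
      apply Nat.eqb_eq in Ht. unfold char_fun in Ht.
      destruct (excluded_middle_informative (A z)); [|contradiction].
      apply halts_byb_spec. destruct (halts_byb e_A z t); [reflexivity|discriminate]. }
    (* x is not in K by stage t, so t < s; but z is already enumerated at t *)
    destruct (Nat.le_gt_cases s t).
    + apply halts_byb_false in E. apply E, (halts_by_mono _ _ s); auto.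
    + apply Hz, (halts_by_mono _ _ t); auto; lia.
Qed.

Lemma D_weu_wtt_complete : wtt_complete A.
Proof.
  split; [exists e_A; exact HA|].
  exists (encode wtt_prog), use. split.
  - exists (encode use_prog). intros x.
    unfold phi, phiA. rewrite decode_encode. apply use_prog_spec.
  - intros x. destruct (least_witness _ (agreeb_exists (use x))) as (t&Ht&Hmin).
    exists (Nat.b2n (halts_byb x x t)). unfold phiA. rewrite decode_encode.
    pose proof (wtt_prog_eval x t Ht Hmin) as Hev.
    split; [apply agreeb_decides_K, Ht|]. split; [|exact Hev].
    apply (evalq_mono _ _ _ _ _ _ Hev). intros; exact I.
Qed.
End DweuWttComplete.

Theorem mainTheorem11 (A : nat -> Prop) :
  re A -> (D_weu A <-> wtt_complete A).
Proof.
  intros HreA. split.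
  - intros [_ (f & [e_f Hf] & Hweu)]. destruct HreA as [e_A HA].
    exact (D_weu_wtt_complete A e_A e_f f HA Hf Hweu).
  - intros [_ (e_red & use & [e_use Huse] & Hred)]. split; [exact HreA|].
    apply (wtt_complete_D_weu A e_red e_use use Huse).
    intros x. destruct (Hred x) as (y&HK&_&Hev). eauto.
Qed.
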